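(* Let $a$ be a weak composition of length $n$ that is not identically zero. Then $\lim_{m\to\infty}\mathcal{G}^{(1)}_{0^m a}=\tilde{L}_{\mathtt{flat}(a)}(x_1,x_2,\dots)$, in the sense that for every monomial $x^c$ in finitely many variables, the coefficient of $x^c$ in $\mathcal{G}^{(1)}_{0^m a}(x_1,\dots,x_{m+n})$ equals its coefficient in $\tilde{L}_{\mathtt{flat}(a)}$ for all sufficiently large $m$.
   Context: $0^m a$ denotes the weak composition obtained by prepending $m$ zeros to $a$. Glide polynomials: a weak komposition is a weak composition whose positive entries are colored black or red, $\mathrm{ex}(b)$ = number of red entries, $\mathtt{flat}(a)$ = sequence of nonzero entries of $a$. For $a$ of length $N$ with nonzero entries exactly at positions $n_1<\dots<n_\ell$, a weak komposition $b$ of length $N$ is a glide of $a$ if there exist $0=i_0<\dots<i_\ell$ with $i_j\le n_j$, $b_k=0$ for $k>i_\ell$, and for each $j$: $b_{i_{j-1}+1}+\dots+b_{i_j}=\mathtt{flat}(a)_j+\#\{\text{red entries among } b_{i_{j-1}+1},\dots,b_{i_j}\}$ and the first nonzero entry among them is black. $\mathcal{G}^{(\beta)}_a(x_1,\dots,x_N)=\sum_b\beta^{\mathrm{ex}(b)}x^b$ over glides $b$ of $a$; $\mathcal{G}^{(1)}$ is the specialization $\beta=1$. Multi-fundamental quasisymmetric functions (Lam–Pylyavskyy): for nonempty finite $S,S'\subset\mathbb{Z}_{>0}$ write $S<S'$ if $\max S<\min S'$ and $S\le S'$ if $\max S\le\min S'$. For a composition $\alpha$ with $|\alpha|=N$,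 let $\tilde{A}_\alpha$ be the set of sequences $\sigma=(S_1,\dots,S_N)$ of nonempty finite subsets of $\mathbb{Z}_{>0}$ such that $S_i<S_{i+1}$ if $i=\alpha_1+\dots+\alpha_k$ for some $k$, and $S_i\le S_{i+1}$ otherwise. $\mathrm{wt}(\sigma)_k$ is the number of indices $i$ with $k\in S_i$, and $\tilde{L}_\alpha=\sum_{\sigma\in\tilde A_\alpha}x^{\mathrm{wt}(\sigma)}$, a formal power series in $x_1,x_2,\dots$. *)

From mathcomp Require Import all_boot.
Set Implicit Arguments. Unset Strict Implicit. Unset Printing Implicit Defensive.

(* Weak compositions are [seq nat]; positions are 1-indexed in the paper and
   0-indexed in seqs (paper position p = seq index p-1). *)

Definition flat (a : seq nat) : seq nat := [seq x <- a | x != 0].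

Definition nzpos (a : seq nat) : seq nat :=
  [seq i.+1 | i <- iota 0 (size a) & nth 0 a i != 0].

(* A weak komposition is a [seq (nat * bool)]: (entry, is_red).
   (Red entries must be positive; this is imposed where kompositions are
   enumerated, see [coefG].) *)
Definition nred (blk : seq (nat * bool)) : nat := count (fun x => x.2) blk.

Definition glide_cond (a : seq nat) (b : seq (nat * bool)) (ix : seq nat) : bool :=
  let l := size (flat a) in
  let ib := 0 :: ix in
  [&& size b == size a, size ix == l, sorted ltn ib,
      all (fun j => nth 0 ix j <= nth 0 (nzpos a) j) (iota 0 l),
      (* b_k = 0 for k > i_l  (paper positions k = seq index + 1) *)
      all (fun x => x.1 == 0) (drop (last 0 ix) b) &
      all (fun j =>
             let blk := drop (nth 0 ib j) (take (nth 0 ib j.+1) b) in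
             (sumn (map fst blk) == nth 0 (flat a) j + nred blk)
             && ~~ (head (0, false) [seq x <- blk | x.1 != 0]).2)
          (iota 0 l)].

(* b is a glide of a : there exist 0 = i_0 < i_1 < ... < i_l (each i_j <= n_j
   <= size a, hence they can be taken in 'I_(size a).+1) satisfying the
   conditions. *)
Definition is_glide (a : seq nat) (b : seq (nat * bool)) : bool :=
  [exists t : (size (flat a)).-tuple 'I_(size a).+1,
     glide_cond a b (map val t)].

(* Coefficient of x^c = x_1^{c_0} x_2^{c_1} ... in G^{(1)}_a(x_1,...,x_N),
   N = size a: the number of glides b of a (kompositions, i.e. colorings
   with red entries positive) whose underlying weak composition is c. *)
Definition coefG (a : seq nat) (c : seq nat) : nat :=
  let N := size a in
  if all (fun x => x == 0) (drop N c) then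
    #|[set col : {ffun 'I_N -> bool} |
        [forall i, col i ==> (0 < nth 0 c i)] &&
        is_glide a [seq (nth 0 c (val i), col i) | i : 'I_N <- enum 'I_N]]|
  else 0.

Definition psums (alpha : seq nat) : seq nat :=
  [seq sumn (take k alpha) | k <- iota 1 (size alpha)].

(* Variable x_{k+1} corresponds
   to k : 'I_(size c); any subset containing an index >= size c would give a
   weight different from c, so sets of 'I_(size c) suffice. *)
Definition setlt K (S S' : {set 'I_K}) : bool :=
  [forall x in S, forall y in S', (x < y)%N].
Definition setle K (S S' : {set 'I_K}) : bool :=
  [forall x in S, forall y in S', (x <= y)%N].

Definition inAtilde (alpha : seq nat) K (sigma : {ffun 'I_(sumn alpha) -> {set 'I_K}}) : bool :=
  [forall i, sigma i != set0] &&
  [forall i, forall j, (val j == (val i).+1) ==>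
     (if (val i).+1 \in psums alpha then setlt (sigma i) (sigma j)
      else setle (sigma i) (sigma j))].

Definition wt_is (alpha : seq nat) (c : seq nat)
  (sigma : {ffun 'I_(sumn alpha) -> {set 'I_(size c)}}) : bool :=
  [forall k : 'I_(size c), #|[set i | k \in sigma i]| == nth 0 c k].

Definition coefL (alpha : seq nat) (c : seq nat) : nat :=
  #|[set sigma : {ffun 'I_(sumn alpha) -> {set 'I_(size c)}} |
      inAtilde sigma && wt_is sigma]|.

From Stdlib Require Import FunctionalExtensionality.
From mathcomp Require Import all_boot zify.
Set Implicit Arguments. Unset Strict Implicit. Unset Printing Implicit Defensive.

(* Once m >= size c, a glide of 0^m a with underlying weak composition c is
   nothing but a coloring of the entries of c: the block ends i_j are forced,
   and the bounds i_j <= n_j never bind because every n_j exceeds size c.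
   Let entry q of c occupy a run of c_q consecutive slots of {0, ..., |alpha|-1},
   alpha = flat a, where a red entry re-uses the last slot of its predecessor;
   the block sums of a glide say that these runs tile all the slots and that
   a block boundary (a partial sum of alpha) never falls strictly inside a run.
   Sending a slot to the set of entries whose run contains it is then a
   bijection onto the elements of tilde A_alpha of weight c, whose inverse
   colors red exactly the entries sharing a slot with an earlier entry. *)

Section NetSums.
Variables (c : seq nat) (red : nat -> bool).
Local Notation cc q := (nth 0 c q).

Definition net q := cc q - red q.
Definition netsum t := \sum_(0 <= q < t) net q.

Lemma netsum0 : netsum 0 = 0.
Proof. exact: big_geq. Qed.

Lemma netsumS t : netsum t.+1 = netsum t + net t.
Proof. exact: big_nat_recr. Qed.

Lemma netsum_cat x y : x <= y -> netsum y = netsum x + \sum_(x <= q < y) net q.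
Proof. exact: big_cat_nat. Qed.

Lemma leq_netsum x y : x <= y -> netsum x <= netsum y.
Proof. by move=> xy; rewrite (netsum_cat xy) leq_addr. Qed.

Lemma ltn_netsum x y : netsum x < netsum y -> x < y.
Proof. by apply: contraTltn => /leq_netsum; rewrite leqNgt. Qed.

Lemma netsum_stable x y : x <= y -> (forall q, x <= q < y -> cc q = 0) ->
  netsum y = netsum x.
Proof.
move=> xy c0; rewrite (netsum_cat xy) big_nat_cond big1 ?addn0 // => q /andP[/c0 + _].
by rewrite /net => ->.
Qed.

Hypothesis red_pos : forall q, red q -> 0 < cc q.

Lemma netsumS_entry t : netsum t.+1 = netsum t + cc t - red t.
Proof. rewrite netsumS /net; case: (boolP (red t)) => [/red_pos|] /=; lia. Qed.

Lemma red_lt_size q : red q -> q < size c.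
Proof. by move/red_pos; apply: contraTltn => /(nth_default 0) ->. Qed.

End NetSums.

Lemma card_ord_interval n a b : b <= n -> #|[set j : 'I_n | a <= j < b]| = b - a.
Proof.
elim: b => [|b IH] hb.
  by apply/eqP; rewrite sub0n cards_eq0; apply/eqP/setP => j; rewrite !inE ltn0 andbF.
case: (leqP a b) => hab.
  have -> : [set j : 'I_n | a <= j < b.+1] = Ordinal hb |: [set j : 'I_n | a <= j < b].
    by apply/setP => j; rewrite !inE -val_eqE /=; apply/idP/idP; lia.
  rewrite cardsU1 IH ?(ltnW hb) // inE /= ltnn andbF /=; lia.
have -> : [set j : 'I_n | a <= j < b.+1] = [set j : 'I_n | a <= j < b].
  by apply/setP => j; rewrite !inE; apply/idP/idP; lia.
rewrite IH ?(ltnW hb) //; lia.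
Qed.

Lemma mem_initial_segment n (X : {set 'I_n}) :
  (forall i i' : 'I_n, i \in X -> i' <= i -> i' \in X) ->
  forall i : 'I_n, (i \in X) = (i < #|X|).
Proof.
move=> Xdown i; apply/idP/idP => [iX|].
  have : [set j : 'I_n | 0 <= j < i.+1] \subset X.
    by apply/subsetP => j; rewrite inE /= ltnS => /(Xdown _ _ iX).
  by move/subset_leq_card; rewrite card_ord_interval // subn0.
apply: contraTT => iX.
have : X \subset [set j : 'I_n | 0 <= j < i].
  apply/subsetP => j jX; rewrite inE /= ltnNge; apply: contra iX; exact: Xdown.
by move/subset_leq_card; rewrite card_ord_interval ?subn0 ?(ltnW (ltn_ord i)) // leqNgt.
Qed.

Lemma mem_final_segment n (Y : {set 'I_n}) T :
  T <= n -> (forall i : 'I_n, i \in Y -> i < T) ->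
  (forall i i' : 'I_n, i \in Y -> i <= i' -> i' < T -> i' \in Y) ->
  forall i : 'I_n, (i \in Y) = (T - #|Y| <= i < T).
Proof.
move=> hT YT Yup i; apply/idP/idP => [iY|/andP[h1 h2]].
  rewrite YT // andbT.
  have : [set j : 'I_n | i <= j < T] \subset Y.
    by apply/subsetP => j; rewrite inE => /andP[]; apply: Yup iY.
  by move/subset_leq_card; rewrite card_ord_interval // !leq_subLR addnC.
apply/negPn/negP => iY.
have : Y \subset [set j : 'I_n | i.+1 <= j < T].
  apply/subsetP => j jY; rewrite inE YT // andbT ltnNge.
  by apply: contra iY => hji; apply: Yup jY hji h2.
by move/subset_leq_card; rewrite card_ord_interval //; lia.
Qed.

(* Entry [p] fills the slots [netsum p - red p, netsum p.+1) of
   'I_(sumn alpha); the middle condition gives a red entry a slot to share. *)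
Definition admissible (alpha c : seq nat) (red : nat -> bool) :=
  [&& netsum c red (size c) == sumn alpha,
      [forall p : 'I_(size c), red p ==> (0 < netsum c red p)] &
      [forall p : 'I_(size c), ~~ has (fun P => (P < sumn alpha) &&
            (netsum c red p - red p < P < netsum c red p.+1)) (psums alpha)]].

Definition slots (alpha c : seq nat) (red : nat -> bool)
  : {ffun 'I_(sumn alpha) -> {set 'I_(size c)}} :=
  [ffun i : 'I_(sumn alpha) => [set p : 'I_(size c) |
     netsum c red p.+1 - nth 0 c p <= i < netsum c red p.+1]].

Definition red_of_sets (alpha c : seq nat)
    (s : {ffun 'I_(sumn alpha) -> {set 'I_(size c)}}) (p : nat) : bool :=
  [exists i, exists q : 'I_(size c), exists p' : 'I_(size c),
     [&& q < p', val p' == p, q \in s i & p' \in s i]].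

Section SlotsOfColoring.
Variables (alpha c : seq nat) (red : nat -> bool).
Local Notation cc q := (nth 0 c q).
Local Notation S := (netsum c red).
Local Notation n := (sumn alpha).
Local Notation K := (size c).
Hypothesis red_pos : forall q, red q -> 0 < cc q.
Hypothesis adm : admissible alpha c red.

Lemma admissible_total : S K = n.
Proof. by case/and3P: adm => /eqP. Qed.

Lemma admissible_red (p : 'I_K) : red p -> 0 < S p.
Proof. by case/and3P: adm => _ /forallP /(_ p) /implyP. Qed.

Lemma admissible_no_descent (p : 'I_K) P : P \in psums alpha -> P < n ->
  S p - red p < P < S p.+1 = false.
Proof.
case/and3P: adm => _ _ /forallP /(_ p) /hasPn /[apply].
by rewrite negb_and => /orP[/negbTE -> //|/negbTE].
Qed.

Lemma netsum_le_total (p : 'I_K) : S p.+1 <= n.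
Proof. by rewrite -admissible_total; apply: leq_netsum. Qed.

Lemma slot_start (p : 'I_K) : S p.+1 - cc p = S p - red p.
Proof.
rewrite (netsumS_entry red_pos); case: (boolP (red p)) => [h|_] /=; last lia.
by have := red_pos h; have := admissible_red h; lia.
Qed.

Lemma entry_le_netsum (p : 'I_K) : cc p <= S p.+1.
Proof.
rewrite (netsumS_entry red_pos); case: (boolP (red p)) => [h|_] /=; last lia.
by have := red_pos h; have := admissible_red h; lia.
Qed.

Local Notation sg := (slots alpha c red).

Lemma mem_slots (i : 'I_n) (p : 'I_K) : (p \in sg i) = (S p - red p <= i < S p.+1).
Proof. by rewrite ffunE inE slot_start. Qed.

Lemma slots_succ (i j : 'I_n) (x y : 'I_K) : j = i.+1 :> nat ->
  x \in sg i -> y \in sg j -> (x <= y) && ((x == y) ==> (nat_of_ord j \notin psums alpha)).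
Proof.
move=> ji; rewrite !mem_slots => /andP[hx1 hx2] /andP[hy1 hy2].
apply/andP; split.
  rewrite leqNgt; apply/negP => /(leq_netsum c red).
  by case: (red x) hx1 => /= hx1; lia.
apply/implyP => /eqP exy; subst y; apply/negP => hP.
by move: (admissible_no_descent x hP (ltn_ord j)); rewrite hy2 andbT; lia.
Qed.

Lemma slots_nonempty (i : 'I_n) : sg i != set0.
Proof.
have exP : exists t, i < S t by exists K; rewrite admissible_total.
case: (ex_minnP exP) => t it tmin.
have t_pos : 0 < t by move: it; case: t {tmin} => //; rewrite netsum0.
have tK : t.-1 < K by have := tmin K; rewrite admissible_total ltn_ord; lia.
apply/set0Pn; exists (Ordinal tK); rewrite mem_slots /= prednK // it andbT.
have : ~~ (i < S t.-1) by apply/negP => /tmin; lia.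
by rewrite -leqNgt; apply: leq_trans; apply: leq_subr.
Qed.

Lemma slots_Atilde : inAtilde sg && wt_is sg.
Proof.
apply/andP; split; [apply/andP; split|].
- by apply/forallP => i; apply: slots_nonempty.
- apply/forallP => i; apply/forallP => j; apply/implyP => /eqP ji.
  case: ifP => jP; apply/forallP => x; apply/implyP => hx;
    apply/forallP => y; apply/implyP => hy;
    case/andP: (slots_succ ji hx hy) => // xy /implyP xy_descent.
  rewrite ltn_neqAle xy andbT.
  by apply/negP => /eqP/val_inj/eqP/xy_descent; rewrite ji jP.
- apply/forallP => k; apply/eqP.
  have -> : [set i | k \in sg i] = [set i : 'I_n | S k.+1 - cc k <= i < S k.+1].
    by apply/setP => i; rewrite !inE ffunE inE.
  by rewrite card_ord_interval ?netsum_le_total //; have := entry_le_netsum k; lia.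
Qed.

Lemma last_entry_before_red p : red p ->
  exists2 q, q < p & (0 < cc q) && (S q.+1 == S p).
Proof.
move=> rp; have pK := red_lt_size red_pos rp.
have Sp_pos : 0 < S p := @admissible_red (Ordinal pK) rp.
have exq : exists q, (q < p) && (0 < cc q).
  have [/existsP [q cq]|/existsPn no_entry] := boolP [exists q : 'I_p, 0 < cc q].
    by exists q; rewrite ltn_ord.
  suff : S p = S 0 by rewrite netsum0; lia.
  by apply: netsum_stable => // q /andP[_ qp]; have := no_entry (Ordinal qp) => /=; lia.
have ub q : (q < p) && (0 < cc q) -> q <= p by case/andP => /ltnW.
have [q /andP[qp cq] qmax] := ex_maxnP exq ub.
exists q => //; rewrite cq eq_sym; apply/eqP/netsum_stable => // r /andP[qr rp'].
by apply/eqP; rewrite eqn0Ngt; apply/negP => cr; have := qmax r; rewrite rp' cr; lia.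
Qed.

Lemma red_of_slots p : red_of_sets sg p = red p.
Proof.
apply/idP/idP.
  case/existsP => i /existsP [q] /existsP [p'] /and4P [qp' /eqP <- qi p'i].
  apply/negPn/negP => /negbTE rp'.
  move: qi p'i; rewrite !mem_slots rp' subn0 => /andP[_ qi] /andP[p'i _].
  by have := leq_netsum c red qp'; lia.
move=> rp; have pK := red_lt_size red_pos rp.
have [q qp /andP[cq /eqP Sq]] := last_entry_before_red rp.
have qK : q < K by lia.
have Sp_pos : 0 < S p := @admissible_red (Ordinal pK) rp.
have Sp_le : S p <= n by rewrite -admissible_total; apply: leq_netsum; lia.
have iP : S p - 1 < n by lia.
have Sp1 := netsumS_entry red_pos p; rewrite rp in Sp1.
have qstart := slot_start (Ordinal qK); rewrite /= Sq in qstart.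
apply/existsP; exists (Ordinal iP); apply/existsP; exists (Ordinal qK).
apply/existsP; exists (Ordinal pK); rewrite /= qp eqxx !mem_slots /= -qstart Sq rp.
have := red_pos rp; lia.
Qed.

End SlotsOfColoring.

Section ColoringOfSets.
Variables (alpha c : seq nat) (s : {ffun 'I_(sumn alpha) -> {set 'I_(size c)}}).
Local Notation cc q := (nth 0 c q).
Local Notation n := (sumn alpha).
Local Notation K := (size c).
Hypothesis sA : inAtilde s && wt_is s.
Local Notation red := (red_of_sets s).

Lemma Atilde_nonempty (i : 'I_n) : s i != set0.
Proof. by case/andP: sA => /andP[/forallP] . Qed.

Lemma Atilde_weight (k : 'I_K) : #|[set i | k \in s i]| = cc k.
Proof. by case/andP: sA => _ /forallP /(_ k) /eqP. Qed.

Lemma Atilde_succ (i j : 'I_n) (x y : 'I_K) : j = i.+1 :> nat ->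
  x \in s i -> y \in s j -> (x <= y) && ((nat_of_ord j \in psums alpha) ==> (x < y)).
Proof.
case/andP: sA => /andP[_ /forallP /(_ i) /forallP /(_ j) /implyP step] _ ji xi yj.
move: (step (introT eqP ji)); rewrite -ji.
case: ifP => jP /forallP /(_ x) /implyP /(_ xi) /forallP /(_ y) /implyP /(_ yj) xy.
  by rewrite (ltnW xy) xy implybT.
by rewrite xy.
Qed.

Lemma Atilde_mono (i j : 'I_n) (x y : 'I_K) : i < j -> x \in s i -> y \in s j -> x <= y.
Proof.
move=> ij; have [d jd] : exists d, nat_of_ord j = i + d.+1 by exists (j - i.+1); lia.
elim: d i x ij jd => [|d IH] i x ij jd xi yj.
  by case/andP: (Atilde_succ (etrans jd (addn1 i)) xi yj).
have i1n : i.+1 < n by have := ltn_ord j; lia.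
case/set0Pn: (Atilde_nonempty (Ordinal i1n)) => z zi1.
case/andP: (Atilde_succ (i := i) (j := Ordinal i1n) erefl xi zi1) => xz _.
by apply: leq_trans xz (IH (Ordinal i1n) z _ _ zi1 yj) => /=; lia.
Qed.

Definition used_before p := [set i : 'I_n | [exists q : 'I_K, (q < p) && (q \in s i)]].
Definition nused p := #|used_before p|.

Lemma mem_used_before p (i : 'I_n) : (i \in used_before p) = (i < nused p).
Proof.
apply: mem_initial_segment => {}i i'; rewrite !inE => /existsP [q /andP[qp qi]] i'i.
have [i'_lt|ii'|i'_eq] := ltngtP i' i.
- case/set0Pn: (Atilde_nonempty i') => z zi'; apply/existsP; exists z; rewrite zi' andbT.
  exact: leq_ltn_trans (Atilde_mono i'_lt zi' qi) qp.
- by move: i'i; rewrite leqNgt ii'.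
- by apply/existsP; exists q; rewrite qp (_ : i' = i) //; apply: val_inj.
Qed.

Lemma nused_le p : nused p <= n.
Proof. by apply: leq_trans (max_card _) _; rewrite card_ord. Qed.

Lemma mem_Atilde (p : 'I_K) (i : 'I_n) :
  (p \in s i) = (nused p.+1 - cc p <= i < nused p.+1).
Proof.
have -> : (p \in s i) = (i \in [set i | p \in s i]) by rewrite inE.
rewrite -Atilde_weight.
apply: mem_final_segment; first exact: nused_le.
  by move=> i0; rewrite inE -mem_used_before inE => pi0; apply/existsP; exists p; rewrite ltnSn.
move=> i0 i1; rewrite !inE -mem_used_before inE => pi0 i01 /existsP [q /andP[qp qi1]].
have [i01_lt|i10|i01_eq] := ltngtP i0 i1.
- rewrite (_ : p = q) //; apply/val_inj/eqP.
  by rewrite eqn_leq (Atilde_mono i01_lt pi0 qi1) -ltnS qp.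
- by move: i01; rewrite leqNgt i10.
- by rewrite (_ : i1 = i0) //; apply: val_inj.
Qed.

Lemma red_of_sets_pos q : red q -> 0 < cc q.
Proof.
case/existsP => i /existsP [q0] /existsP [p'] /and4P [_ /eqP <- _ p'i].
by rewrite -Atilde_weight; apply/card_gt0P; exists i; rewrite inE.
Qed.

Lemma red_of_sets_lt_size p : red p -> p < K.
Proof.
by case/existsP => i /existsP [q] /existsP [p'] /and4P [_ /eqP <- _ _]; apply: ltn_ord.
Qed.

Lemma nused0 : nused 0 = 0.
Proof.
apply/eqP; rewrite cards_eq0; apply/eqP/setP => i; rewrite !inE.
by apply/negbTE/existsPn => q; rewrite ltn0.
Qed.

Lemma used_beforeS (p : 'I_K) :
  used_before p.+1 = used_before p :|: [set i | p \in s i].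
Proof.
apply/setP => i; rewrite !inE; apply/existsP/orP => [[q /andP[qp qi]]|].
  have [q_lt|p_lt|q_eq] := ltngtP q p.
  - by left; apply/existsP; exists q; rewrite q_lt.
  - by move: qp; rewrite ltnS leqNgt p_lt.
  - by right; rewrite (_ : p = q) //; apply: val_inj.
case=> [/existsP[q /andP[qp qi]]|pi]; last by exists p; rewrite pi ltnSn.
by exists q; rewrite qi ltnW.
Qed.

(* Two slots of the same entry [p] are consecutive, so an earlier entry can
   share a slot with [p] only at the first slot of [p]. *)
Lemma card_used_before_shared (p : 'I_K) :
  #|used_before p :&: [set i | p \in s i]| = red p.
Proof.
have [rp|nrp] := boolP (red p); last first.
  apply/eqP; rewrite cards_eq0; apply/eqP/setP => i; rewrite !inE.
  apply/negbTE/negP => /andP [/existsP [q /andP[qp qi]] pi]; move/negP: nrp; apply.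
  apply/existsP; exists i; apply/existsP; exists q; apply/existsP; exists p.
  by rewrite qp qi pi eqxx.
case/existsP: (rp) => i /existsP [q] /existsP [p'] /and4P [qp' /eqP p'p qi p'i].
have {p'p} ep : p' = p by apply: val_inj.
subst p'.
apply/eqP; rewrite /= eqn_leq; apply/andP; split; last first.
  by apply/card_gt0P; exists i; rewrite !inE p'i andbT; apply/existsP; exists q; rewrite qp' qi.
rewrite -(cards1 i); apply/subset_leq_card/subsetP => i'.
rewrite !inE => /andP [/existsP[q' /andP[q'p q'i']] pi']; apply/eqP.
have [i'i|ii'|//] := ltngtP i' i; last exact: val_inj.
- by have := Atilde_mono i'i pi' qi; lia.
- by have := Atilde_mono ii' p'i q'i'; lia.
Qed.

Lemma nusedS p : nused p.+1 = nused p + cc p - red p.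
Proof.
have [pK|Kp] := ltnP p K; last first.
  have rp : red p = false by apply: contraTF Kp => /red_of_sets_lt_size; rewrite -ltnNge.
  rewrite nth_default // rp /nused (_ : used_before p.+1 = used_before p) ?addn0 ?subn0 //.
  apply/setP => i; rewrite !inE; apply/existsP/existsP => -[q /andP[qp qi]];
    by exists q; rewrite qi andbT; have := ltn_ord q; lia.
have := cardsUI (used_before (Ordinal pK)) [set i | Ordinal pK \in s i].
rewrite -used_beforeS card_used_before_shared Atilde_weight /nused /= => <-.
by rewrite addnK.
Qed.

Lemma netsum_nused p : netsum c red p = nused p.
Proof.
elim: p => [|p IH]; first by rewrite netsum0 nused0.
by rewrite (netsumS_entry red_of_sets_pos) IH nusedS.
Qed.

Lemma slots_red_of_sets : slots alpha c red = s.
Proof.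
by apply/ffunP => i; apply/setP => p; rewrite ffunE inE !netsum_nused mem_Atilde.
Qed.

Lemma admissible_red_of_sets : admissible alpha c red.
Proof.
apply/and3P; split.
- rewrite netsum_nused /nused (_ : used_before K = setT) ?cardsT ?card_ord //.
  apply/setP => i; rewrite !inE; case/set0Pn: (Atilde_nonempty i) => q qi.
  by apply/existsP; exists q; rewrite qi ltn_ord.
- apply/forallP => p; apply/implyP => rp; rewrite netsum_nused /nused.
  case/existsP: (rp) => i /existsP [q] /existsP [p'] /and4P [qp' /eqP p'p qi _].
  by apply/card_gt0P; exists i; rewrite inE; apply/existsP; exists q; rewrite qi -p'p qp'.
- apply/forallP => p; apply/hasPn => P descP; apply/negP => /and3P [Pn lo hi].
  rewrite !netsum_nused in lo hi.
  have step := nusedS p; have cp := @red_of_sets_pos p.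
  have P1n : P.-1 < n by lia.
  have pP1 : p \in s (Ordinal P1n) by rewrite mem_Atilde /=; case: (red p) cp lo step; lia.
  have pP : p \in s (Ordinal Pn) by rewrite mem_Atilde /=; case: (red p) cp lo step; lia.
  have PP1 : Ordinal Pn = (Ordinal P1n).+1 :> nat by rewrite /=; lia.
  by case/andP: (Atilde_succ PP1 pP1 pP) => _; rewrite /= descP ltnn.
Qed.

End ColoringOfSets.

Definition red_at N (col : {ffun 'I_N -> bool}) (p : nat) : bool :=
  [exists i : 'I_N, (val i == p) && col i].

Lemma red_atE N (col : {ffun 'I_N -> bool}) (i : 'I_N) : red_at col i = col i.
Proof.
apply/existsP/idP => [[j /andP [/eqP/val_inj -> //]]|ci].
by exists i; rewrite eqxx.
Qed.

Lemma red_at_pos N c (col : {ffun 'I_N -> bool}) :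
  [forall i, col i ==> (0 < nth 0 c i)] -> forall q, red_at col q -> 0 < nth 0 c q.
Proof. by move=> /forallP col_pos q /existsP [i /andP [/eqP <-]]; apply/implyP. Qed.

Definition admissible_colorings alpha c N :=
  [set col : {ffun 'I_N -> bool} |
     [forall i, col i ==> (0 < nth 0 c i)] && admissible alpha c (red_at col)].

Lemma coefL_admissible_colorings alpha c N : size c <= N ->
  coefL alpha c = #|admissible_colorings alpha c N|.
Proof.
move=> KN; pose sl (col : {ffun 'I_N -> bool}) := slots alpha c (red_at col).
have sl_inj : {in admissible_colorings alpha c N &, injective sl}.
  move=> col1 col2; rewrite !inE => /andP [pos1 adm1] /andP [pos2 adm2] eq_sl.
  apply/ffunP => i; rewrite -!red_atE.
  rewrite -(red_of_slots (red_at_pos pos1) adm1) -(red_of_slots (red_at_pos pos2) adm2).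
  by rewrite /sl in eq_sl; rewrite eq_sl.
rewrite /coefL -(card_in_imset sl_inj); apply: eq_card => s.
rewrite [in LHS]inE; apply/idP/imsetP => [sA|[col]]; last first.
  by rewrite inE => /andP [pos adm] ->; apply: slots_Atilde (red_at_pos pos) adm.
pose col := [ffun i : 'I_N => red_of_sets s i].
have red_col : red_at col = red_of_sets s.
  apply: functional_extensionality => p.
  have [pN|Np] := ltnP p N; first by rewrite -[p]/(val (Ordinal pN)) red_atE ffunE.
  apply/idP/idP => [/existsP [i /andP [/eqP ip _]]|/red_of_sets_lt_size pK].
    by have := ltn_ord i; rewrite ip; lia.
  by lia.
exists col; last by rewrite /sl red_col slots_red_of_sets.
rewrite inE red_col admissible_red_of_sets // andbT.
by apply/forallP => i; apply/implyP; rewrite ffunE; apply: red_of_sets_pos.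
Qed.

Lemma filter_index_iota_head (P : pred nat) x y h t :
  [seq q <- index_iota x y | P q] = h :: t ->
  [/\ x <= h < y, P h & forall q, x <= q < h -> ~~ P q].
Proof.
move=> eL; have : h \in h :: t := mem_head h t.
rewrite -eL mem_filter mem_index_iota => /andP[Ph xhy]; split=> // q /andP[xq qh].
apply/negP => Pq; have : q \in h :: t by rewrite -eL mem_filter Pq mem_index_iota xq /=; lia.
rewrite inE => /orP[/eqP qh'|qt]; first by move: qh; rewrite qh' ltnn.
have : sorted ltn (h :: t) by rewrite -eL sorted_filter ?iota_ltn_sorted //; apply: ltn_trans.
by move/(order_path_min ltn_trans)/allP/(_ q qt); lia.
Qed.

Definition first_nonzero_black (c : seq nat) (red : nat -> bool) x y :=
  if [seq q <- index_iota x y | nth 0 c q != 0] is h :: _ then ~~ red h else true.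

Lemma first_nonzero_black_intro (c : seq nat) (red : nat -> bool) x y :
  (forall h, x <= h < y -> nth 0 c h != 0 -> (forall q, x <= q < h -> nth 0 c q = 0) ->
     ~~ red h) -> first_nonzero_black c red x y.
Proof.
rewrite /first_nonzero_black; case eL: [seq q <- _ | _] => [//|h t] black.
case: (filter_index_iota_head eL) => xhy ch before; apply: black => // q /before.
by rewrite negbK => /eqP.
Qed.

Lemma first_nonzero_black_red (c : seq nat) (red : nat -> bool) x y p :
  (forall q, red q -> 0 < nth 0 c q) ->
  first_nonzero_black c red x y -> x <= p < y -> red p -> netsum c red x < netsum c red p.
Proof.
move=> red_pos; rewrite /first_nonzero_black.
case eL: [seq q <- _ | _] => [|h t] black xpy rp.
  have : p \in [::] by rewrite -eL mem_filter mem_index_iota xpy -lt0n red_pos.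
  by rewrite in_nil.
case: (filter_index_iota_head eL) => /andP[xh _] ch before.
have hp : h < p.
  rewrite ltn_neqAle; apply/andP; split; first by apply: contraNneq black => ->.
  by rewrite leqNgt; apply/negP => ph; have := before p; rewrite -lt0n red_pos ?xpy //; lia.
apply: leq_ltn_trans (leq_netsum c red xh) (leq_trans _ (leq_netsum c red hp)).
by rewrite netsumS /net (negbTE black) subn0 -addn1 leq_add2l lt0n.
Qed.

(* The glide conditions for the block ends [u j] = i_j. *)
Definition glide_blocks (alpha c : seq nat) (red : nat -> bool) (u : nat -> nat) :=
  [/\ u 0 = 0,
      forall j, j < size alpha -> u j < u j.+1,
      forall j, j < size alpha -> \sum_(u j <= q < u j.+1) net c red q = nth 0 alpha j,
      forall j, j < size alpha -> first_nonzero_black c red (u j) (u j.+1) &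
      forall q, u (size alpha) <= q -> nth 0 c q = 0].

Section AdmissibleOfBlocks.
Variables (alpha c : seq nat) (red : nat -> bool) (u : nat -> nat).
Local Notation cc q := (nth 0 c q).
Local Notation l := (size alpha).
Local Notation K := (size c).
Local Notation S := (netsum c red).
Hypothesis red_pos : forall q, red q -> 0 < cc q.
Hypothesis blocks : glide_blocks alpha c red u.

Lemma glide_blocks_mono : {in [pred j | j <= l] &, {homo u : i j / i <= j}}.
Proof.
case: blocks => _ u_incr _ _ _.
apply: homo_leq_in => [//|y x z|i j|i]; [exact: leq_trans| |].
  by rewrite !inE => _ jl k /andP[_ kj]; rewrite inE (leq_trans (ltnW kj) jl).
by rewrite !inE => _ /u_incr /ltnW.
Qed.

Lemma netsum_glide_blocks j : j <= l -> S (u j) = sumn (take j alpha).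
Proof.
case: blocks => u0 u_incr bsum _ _.
elim: j => [|j IH] jl; first by rewrite u0 take0 netsum0.
rewrite (netsum_cat c red (ltnW (u_incr j jl))) IH 1?ltnW // bsum //.
by rewrite (take_nth 0 jl) sumn_rcons.
Qed.

Lemma glide_blocks_total : S K = sumn alpha.
Proof.
case: blocks => _ _ _ _ tail.
have e1 : S (maxn K (u l)) = S K.
  by apply: netsum_stable (leq_maxl _ _) _ => q /andP[Kq _]; rewrite nth_default.
have e2 : S (maxn K (u l)) = S (u l).
  by apply: netsum_stable (leq_maxr _ _) _ => q /andP[/tail].
by rewrite -e1 e2 netsum_glide_blocks // take_size.
Qed.

Lemma red_in_glide_block p : red p ->
  exists2 j, j < l & (u j <= p < u j.+1) && (S (u j) < S p).
Proof.
case: blocks => u0 _ _ head tail rp.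
have pl : p < u l by rewrite ltnNge; apply: contraL (red_pos rp) => /tail ->.
have exP : exists j, p < u j by exists l.
case: (ex_minnP exP) => j pj jmin.
have j_pos : 0 < j by move: pj; case: j {jmin} => //; rewrite u0.
have ujp : u j.-1 <= p by rewrite leqNgt; apply/negP => /jmin; lia.
have jl : j.-1 < l by have := jmin l pl; lia.
have := head _ jl; rewrite prednK // => blk.
exists j.-1 => //; rewrite ujp prednK //= pj /=.
by apply: (first_nonzero_black_red red_pos blk) => //; rewrite ujp pj.
Qed.

Lemma admissible_of_glide_blocks : admissible alpha c red.
Proof.
apply/and3P; split.
- by rewrite glide_blocks_total.
- by apply/forallP => p; apply/implyP => /red_in_glide_block [j _ /andP[_]]; lia.
apply/forallP => p; apply/hasPn => P /mapP [k]; rewrite mem_iota => /andP [k1 k2] ->.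
apply/negP => /and3P [Pn lo hi].
have kl : k < l.
  rewrite ltn_neqAle; apply/andP; split; last by lia.
  by apply: contraTneq Pn => ->; rewrite take_size ltnn.
rewrite -(netsum_glide_blocks (ltnW kl)) in Pn lo hi.
have [pk|kp] := ltnP p (u k); first by have := leq_netsum c red pk; lia.
have [rp|nrp] := boolP (red p); last first.
  by have := leq_netsum c red kp; rewrite (negbTE nrp) in lo; lia.
case: (red_in_glide_block rp) => j jl /andP[/andP[ujp puj] Sj].
have kj : k <= j.
  rewrite leqNgt; apply/negP => jk.
  by have := glide_blocks_mono (x := j.+1) (y := k) jl (ltnW kl) jk; lia.
have := leq_netsum c red (glide_blocks_mono (ltnW kl) (ltnW jl) kj).
by rewrite rp in lo; lia.
Qed.

End AdmissibleOfBlocks.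

Lemma ltn_sumn_take (s : seq nat) i j : 0 \notin s -> i < j -> j <= size s ->
  sumn (take i s) < sumn (take j s).
Proof.
move=> s_pos ij js.
rewrite -(subnKC (ltnW ij)) takeD sumn_cat -[X in X < _]addn0 ltn_add2l.
rewrite (drop_nth 0 (leq_trans ij js)) -(subnSK ij) /= ltn_addr // lt0n.
apply: contraNneq s_pos => <-.
by rewrite mem_nth // (leq_trans ij js).
Qed.

Section BlocksOfAdmissible.
Variables (alpha c : seq nat) (red : nat -> bool).
Local Notation cc q := (nth 0 c q).
Local Notation l := (size alpha).
Local Notation n := (sumn alpha).
Local Notation K := (size c).
Local Notation S := (netsum c red).
Local Notation P j := (sumn (take j alpha)).
Hypothesis red_pos : forall q, red q -> 0 < cc q.
Hypothesis adm : admissible alpha c red.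
Hypothesis alpha_pos : 0 \notin alpha.

Definition last_below m := \max_(t < K.+1 | S t <= m) t.

Lemma last_below_spec m : S (last_below m) <= m /\ last_below m <= K.
Proof.
have S0 : S (@ord0 K) <= m by rewrite netsum0.
rewrite /last_below (bigmax_eq_arg _ S0).
by case: arg_maxnP => //= t St _; split; last exact: ltn_ord t.
Qed.

Lemma leq_last_below m (t : 'I_K.+1) : S t <= m -> t <= last_below m.
Proof. exact: leq_bigmax_cond. Qed.

Lemma descent_entry m : m \in psums alpha -> 0 < m < n ->
  [/\ S (last_below m) = m, last_below m < K,
      red (last_below m) = false & 0 < cc (last_below m)].
Proof.
move=> desc /andP[m_pos mn]; case: (last_below_spec m) => St tK.
set t := last_below m in St tK *.
have tK' : t < K.
  rewrite ltn_neqAle tK andbT; apply/negP => /eqP tK_eq.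
  by move: St; rewrite tK_eq (admissible_total adm) leqNgt mn.
have St1 : m < S t.+1.
  rewrite ltnNge; apply/negP => /(@leq_last_below m (Ordinal (tK' : t.+1 < K.+1))).
  by rewrite /= -/t ltnn.
have no_desc := admissible_no_descent adm (Ordinal tK') desc mn; rewrite /= St1 andbT in no_desc.
have St_eq : S t = m by apply/eqP; rewrite eqn_leq St leqNgt; apply: contraFN no_desc; lia.
have rt : red t = false by apply: contraFF no_desc => ->; lia.
by split => //; move: St1; rewrite (netsumS_entry red_pos) rt St_eq; lia.
Qed.

(* [block_end j] is the block end i_j of the glide attached to an admissible
   coloring. *)
Definition block_end j := if j == 0 then 0 else if j == l then K else last_below (P j).

Lemma block_end_le j : block_end j <= K.
Proof.
by rewrite /block_end; case: ifP => // _; case: ifP => // _; case: (last_below_spec (P j)).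
Qed.

Lemma descent_block_end j : 0 < j < l ->
  [/\ S (block_end j) = P j, red (block_end j) = false & 0 < cc (block_end j)].
Proof.
move=> /andP[j_pos jl].
have -> : block_end j = last_below (P j).
  by rewrite /block_end (gtn_eqF j_pos) (ltn_eqF jl).
have desc : P j \in psums alpha by apply/mapP; exists j; rewrite // mem_iota; lia.
have P_pos : 0 < P j by have := ltn_sumn_take alpha_pos j_pos (ltnW jl); rewrite take0.
have Pn : P j < n by have := ltn_sumn_take alpha_pos jl (leqnn _); rewrite take_size.
by case: (descent_entry desc (introT andP (conj P_pos Pn))).
Qed.

Lemma netsum_block_end j : j <= l -> S (block_end j) = P j.
Proof.
move=> jl; have [->|j_pos] := posnP j; first by rewrite take0 netsum0.
have [jl'|lj|->] := ltngtP j l.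
- by case: (descent_block_end (introT andP (conj j_pos jl'))).
- by move: jl; rewrite leqNgt lj.
- by rewrite /block_end eqxx (gtn_eqF (leq_trans j_pos jl)) take_size (admissible_total adm).
Qed.

Lemma block_end_incr j : j < l -> block_end j < block_end j.+1.
Proof.
move=> jl; apply: (@ltn_netsum c red).
rewrite (netsum_block_end (ltnW jl)) (netsum_block_end jl).
exact: ltn_sumn_take alpha_pos (ltnSn j) jl.
Qed.

Lemma first_block_head : first_nonzero_black c red 0 (block_end 1).
Proof.
apply: first_nonzero_black_intro => h _ ch before; apply/negP => rh.
have hK : h < K by rewrite ltnNge; apply: contra ch => /(nth_default 0) ->.
have := admissible_red adm (p := Ordinal hK) rh.
by rewrite /= (netsum_stable red (leq0n h) before) netsum0.
Qed.

Lemma inner_block_head j : 0 < j < l ->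
  first_nonzero_black c red (block_end j) (block_end j.+1).
Proof.
move=> jl; case: (descent_block_end jl) => _ rj cj.
apply: first_nonzero_black_intro => h /andP[jh _] ch before.
suff -> : h = block_end j by rewrite rj.
apply/eqP; rewrite eqn_leq jh andbT leqNgt; apply/negP => jh'.
by have := before (block_end j); rewrite leqnn jh' => /(_ isT); lia.
Qed.

Lemma glide_blocks_block_end : 0 < l -> glide_blocks alpha c red block_end.
Proof.
move=> l_pos; split => [//|j|j jl|j jl|q]; first exact: block_end_incr.
- have := netsum_cat c red (ltnW (block_end_incr jl)).
  rewrite (netsum_block_end (ltnW jl)) (netsum_block_end jl) (take_nth 0 jl) sumn_rcons.
  by move/eqP; rewrite eqn_add2l => /eqP.
- have [->|j_pos] := posnP j; first exact: first_block_head.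
  by apply: inner_block_head; rewrite j_pos.
- by rewrite /block_end eqxx gtn_eqF // => /(nth_default 0).
Qed.

End BlocksOfAdmissible.

Definition colored (c : seq nat) (red : nat -> bool) (s : seq nat) : seq (nat * bool) :=
  [seq (nth 0 c q, red q) | q <- s].

Section Colored.
Variables (c : seq nat) (red : nat -> bool).
Local Notation cc q := (nth 0 c q).
Hypothesis red_pos : forall q, red q -> 0 < cc q.

Lemma drop_take_colored N x y : x <= y -> y <= N ->
  drop x (take y (colored c red (iota 0 N))) = colored c red (index_iota x y).
Proof.
move=> xy yN; rewrite -map_take -map_drop take_iota drop_iota add0n.
by rewrite (minn_idPl yN).
Qed.

Lemma sumn_colored s :
  sumn (map fst (colored c red s)) = \sum_(q <- s) net c red q + nred (colored c red s).
Proof.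
elim: s => [|q s IH]; first by rewrite big_nil.
rewrite big_cons /= IH /nred /= /net; case: (boolP (red q)) => [/red_pos|] /=; lia.
Qed.

Lemma head_colored s :
  ~~ (head (0, false) [seq x <- colored c red s | x.1 != 0]).2 =
  if [seq q <- s | cc q != 0] is h :: _ then ~~ red h else true.
Proof. by elim: s => //= q s IH; case: ifP. Qed.

End Colored.

Lemma path_ltn_map_iota (u : nat -> nat) k x :
  (forall j, x <= j < x + k -> u j < u j.+1) -> path ltn (u x) (map u (iota x.+1 k)).
Proof.
elim: k x => [|k IH] x u_incr //=.
rewrite u_incr /=; last lia.
by apply: IH => j xj; apply: u_incr; lia.
Qed.

Lemma glide_blocks_of_glide_cond a c (red : nat -> bool) ix :
  (forall q, red q -> 0 < nth 0 c q) ->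
  size c <= size a -> all (fun x => x <= size a) ix ->
  glide_cond a (colored c red (iota 0 (size a))) ix -> glide_blocks (flat a) c red (nth 0 (0 :: ix)).
Proof.
move=> red_pos Ka ixa /and5P[_ /eqP size_ix sorted_ix _ /andP[tail /allP blocks]].
set u := nth 0 (0 :: ix).
have u_incr j : j < size (flat a) -> u j < u j.+1.
  move=> jl; have jl' : j < size (0 :: ix) by rewrite /= size_ix ltnS ltnW.
  have j1l : j.+1 < size (0 :: ix) by rewrite /= size_ix ltnS.
  exact: (sorted_ltn_nth ltn_trans 0 sorted_ix) j j.+1 jl' j1l (ltnSn j).
have u_le j : u j <= size a.
  rewrite /u; have [js|js] := ltnP j (size (0 :: ix)); last by rewrite nth_default.
  by have /allP := (ixa : all (fun x => x <= size a) (0 :: ix)); apply; rewrite mem_nth.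
have block j : j < size (flat a) ->
    (\sum_(u j <= q < u j.+1) net c red q == nth 0 (flat a) j)
    && first_nonzero_black c red (u j) (u j.+1).
  move=> jl; have := blocks j; rewrite mem_iota jl => /(_ isT) /=.
  rewrite (drop_take_colored _ _ (ltnW (u_incr j jl)) (u_le _)) sumn_colored // eqn_add2r.
  by rewrite head_colored.
split => // [j /block /andP[/eqP]|j /block /andP[]|q uq] //.
have [qa|aq] := ltnP q (size a); last by rewrite nth_default //; apply: leq_trans Ka aq.
move: tail; rewrite (last_nth 0) size_ix -map_drop drop_iota all_map => /allP /(_ q).
by rewrite mem_iota /= uq /=; lia.
Qed.

Lemma glide_cond_of_glide_blocks a c (red : nat -> bool) u :
  (forall q, red q -> 0 < nth 0 c q) -> glide_blocks (flat a) c red u ->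
  (forall j, j <= size (flat a) -> u j <= size a) ->
  (forall j, j < size (flat a) -> u j.+1 <= nth 0 (nzpos a) j) ->
  glide_cond a (colored c red (iota 0 (size a))) (map u (iota 1 (size (flat a)))).
Proof.
move=> red_pos [u0 u_incr bsum bhead tail] u_le u_nzpos.
set l := size (flat a); set ix := map u (iota 1 l).
have ixE : 0 :: ix = map u (iota 0 l.+1) by rewrite /= u0.
have nth_ix j : j <= l -> nth 0 (0 :: ix) j = u j.
  by move=> jl; rewrite ixE (nth_map 0) ?size_iota ?nth_iota.
apply/and5P; split.
- by rewrite size_map size_iota.
- by rewrite size_map size_iota.
- by rewrite ixE /= path_ltn_map_iota // => j /andP[_ jl]; apply: u_incr.
- apply/allP => j; rewrite mem_iota /= => jl.
  by rewrite (nth_map 0) ?size_iota // nth_iota // add1n u_nzpos.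
apply/andP; split.
  rewrite (last_nth 0) size_map size_iota nth_ix // -map_drop drop_iota all_map.
  by apply/allP => q; rewrite mem_iota /= => /andP[/tail -> _].
apply/allP => j; rewrite mem_iota /= => jl.
have -> : nth 0 ix j = u j.+1 by rewrite -(nth_ix j.+1).
rewrite nth_ix 1?ltnW // drop_take_colored ?u_le ?(ltnW (u_incr j jl)) //.
by rewrite sumn_colored // eqn_add2r bsum // eqxx head_colored; apply: bhead.
Qed.

Lemma size_nzpos a : size (nzpos a) = size (flat a).
Proof.
rewrite size_map size_filter size_filter -[in RHS](mkseq_nth 0 a).
by rewrite /mkseq count_map.
Qed.

Lemma is_glide_colored a c (red : nat -> bool) : (forall q, red q -> 0 < nth 0 c q) ->
  size c <= size a -> (forall x, x \in nzpos a -> size c < x) -> 0 < size (flat a) ->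
  is_glide a (colored c red (iota 0 (size a))) = admissible (flat a) c red.
Proof.
move=> red_pos Ka nzpos_gt l_pos; apply/existsP/idP => [[t]|adm].
  move/glide_blocks_of_glide_cond => /(_ red_pos Ka) blocks.
  apply: admissible_of_glide_blocks red_pos (blocks _).
  by apply/allP => y /mapP [x _ ->]; apply: ltn_ord x.
have alpha_pos : 0 \notin flat a by rewrite mem_filter eqxx.
set u := block_end (flat a) c red.
have u_le j : u j <= size a := leq_trans (block_end_le _ _ _ _) Ka.
have tsize : size [seq inord (u j) : 'I_(size a).+1 | j <- iota 1 (size (flat a))] ==
    size (flat a) by rewrite size_map size_iota.
exists (Tuple tsize).
have -> : map val (Tuple tsize) = map u (iota 1 (size (flat a))).
  by rewrite -map_comp; apply: eq_map => j /=; rewrite inordK // ltnS.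
apply: glide_cond_of_glide_blocks (glide_blocks_block_end red_pos adm alpha_pos l_pos) _ _ => //.
move=> j jl; apply/ltnW/(leq_ltn_trans (block_end_le _ _ _ _))/nzpos_gt.
by rewrite mem_nth // size_nzpos.
Qed.

Lemma coefG_admissible_colorings a c :
  size c <= size a -> (forall x, x \in nzpos a -> size c < x) -> 0 < size (flat a) ->
  coefG a c = #|admissible_colorings (flat a) c (size a)|.
Proof.
move=> Ka nzpos_gt l_pos; rewrite /coefG (drop_oversize Ka) /=.
apply: eq_card => col; rewrite !inE.
have -> : [seq (nth 0 c (val i), col i) | i <- enum 'I_(size a)] =
    colored c (red_at col) (iota 0 (size a)).
  by rewrite /colored -val_enum_ord -map_comp; apply: eq_map => i /=; rewrite red_atE.
case: (boolP [forall i, _]) => //= col_pos.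
exact: is_glide_colored (red_at_pos col_pos) Ka nzpos_gt l_pos.
Qed.

Lemma flat_pad m a : flat (nseq m 0 ++ a) = flat a.
Proof. by rewrite /flat filter_cat; elim: m. Qed.

Lemma nzpos_pad m a x : x \in nzpos (nseq m 0 ++ a) -> m < x.
Proof.
case/mapP => i; rewrite mem_filter nth_cat size_nseq => /andP[+ _] ->.
by case: ltnP => // im; rewrite nth_nseq im eqxx.
Qed.

Theorem mainTheorem6 (a : seq nat) (ha : has (fun x => x != 0) a) :
  forall c : seq nat, exists M : nat, forall m : nat, M <= m ->
    coefG (nseq m 0 ++ a) c = coefL (flat a) c.
Proof.
move=> c; exists (size c) => m cm.
have Ka : size c <= size (nseq m 0 ++ a) by rewrite size_cat size_nseq (leq_trans cm) ?leq_addr.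
rewrite (coefL_admissible_colorings _ Ka) -(flat_pad m) coefG_admissible_colorings //.
  by move=> x /nzpos_pad; apply: leq_trans.
by rewrite flat_pad /flat size_filter -has_count.
Qed.
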